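(* Let $a_1\ge1$ be an integer, let $m_1, m_2 \ge 1$ be coprime integers, let $\bm{x}^{(1)}, \bm{x}^{(2)} \in \mathcal{L}(f)$, and put $\tau_i := \tau(\bm{x}^{(i)}; m_i)$ for $i \in \{1,2\}$. If $\rho(\bm{x}^{(2)}; m_2) = \tau_2$, then there exists $\bm{x} \in \mathcal{L}(f)$ such that $x_j \equiv x^{(i)}_j \pmod{m_i}$ for all $j\ge0$ and each $i\in\{1,2\}$, and $$\rho(\bm{x}; m_1m_2) = \frac{\tau_2}{d}\sum_{r=0}^{d-1}\rho(\bm{x}^{(1)}; m_1, r, d),$$ where $d := \gcd(\tau_1,\tau_2)$.
   Context: Let $f := X^2 - a_1X - 1$. $\mathcal{L}(f)$ is the set of integer sequences $\bm{x}=(x_n)_{n\ge0}$ with $x_{n+2} = a_1x_{n+1} + x_n$ for all $n\ge0$. For an integer $m\ge1$, $\tau(\bm{x}; m)$ is the minimal integer $t \ge 1$ with $x_{n+t}\equiv x_n \pmod m$ for all sufficiently large $n$, and $\rho(\bm{x};m) := \#\{x_n \bmod m : n\ge0\}$. For integers $m, d \ge 1$ and $r$, $\rho(\bm{x}; m, r, d) := \#\{x_n \bmod m : n \ge 0,\ n \equiv r \pmod d\}$. *)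

From HB Require Import structures.
From mathcomp Require Import all_boot all_order all_algebra.
From mathcomp Require Import boolp.
Set Implicit Arguments. Unset Strict Implicit. Unset Printing Implicit Defensive.
Import Order.TTheory GRing.Theory Num.Theory.

Local Open Scope ring_scope.

(* L(f) for f = X^2 - a1 X - 1: integer sequences with x_{n+2} = a1 x_{n+1} + x_n *)
Definition inL (a1 : int) (x : nat -> int) : Prop :=
  forall n : nat, x n.+2 = a1 * x n.+1 + x n.

Definition eventual_period (x : nat -> int) (m t : nat) : Prop :=
  exists N : nat, forall n : nat, (N <= n)%N -> (x (n + t)%N == x n %[mod m%:Z])%Z.

(* tau(x; m): the minimal t >= 1 that is an eventual period (0 if none exists;
   for x in L(f) and m >= 1 one always exists). *)
Definition tau (x : nat -> int) (m : nat) : nat :=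
  match pselect (exists t : nat, `[< (0 < t)%N /\ eventual_period x m t >]) with
  | left h => ex_minn h
  | right _ => 0%N
  end.

Definition rho (x : nat -> int) (m : nat) : nat :=
  #|[set k : 'I_m | `[< exists n : nat, (x n %% m%:Z)%Z = (k : nat)%:Z >]]|.

Definition rho_ap (x : nat -> int) (m r d : nat) : nat :=
  #|[set k : 'I_m | `[< exists n : nat, n = r %[mod d] /\ (x n %% m%:Z)%Z = (k : nat)%:Z >]]|.

(* Let x := zchinese m1 m2 x1 x2, termwise; it lies in L(f) since L(f) is a
   module, and by the Chinese remainder theorem rho(x; m1 m2) counts the pairs
   (x1_n mod m1, x2_n mod m2).  The recurrence can be run backwards, so an
   eventual period mod m is a period of the whole sequence.  Since
   rho(x2; m2) = tau2, the residue x2_n mod m2 determines n mod tau2, so we count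
   the pairs (n mod tau2, x1_n mod m1) instead.  For a fixed s = n mod tau2 the
   attained residues of x1 are those along the progression n = s mod d: given
   such an n, the generalized Chinese remainder theorem yields n' = n mod tau1
   with n' = s mod tau2, and x1_n' = x1_n mod m1 by tau1-periodicity.  Summing
   over s < tau2 gives tau2/d copies of the sum over r < d. *)

From mathcomp Require Import all_boot all_algebra.
From mathcomp Require Import boolp ring.
Import GRing.Theory.
Set Implicit Arguments. Unset Strict Implicit. Unset Printing Implicit Defensive.
Local Open Scope ring_scope.

Section Residues.
Variables (m : nat) (m_gt0 : (0 < m)%N).

Lemma absz_modz_lt (z : int) : (`|(z %% m%:Z)%Z|%N < m)%N.
Proof. by rewrite -ltz_nat gez0_abs ?modz_ge0 ?ltz_pmod // -lt0n. Qed.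

Definition ord_modz (z : int) : 'I_m := Ordinal (absz_modz_lt z).

Definition ord_modn (n : nat) : 'I_m := Ordinal (ltn_pmod n m_gt0).

Lemma ord_modzE z : (ord_modz z)%:Z = (z %% m%:Z)%Z.
Proof. by rewrite /= gez0_abs // modz_ge0 // -lt0n. Qed.

Lemma eq_ord_modz z (k : 'I_m) : (ord_modz z = k) <-> ((z %% m%:Z)%Z = k%:Z).
Proof.
rewrite -ord_modzE; split=> [<- // | e].
by apply: val_inj; apply/eqP; rewrite -eqz_nat e.
Qed.

Lemma eqz_ord_modz a b : (ord_modz a == ord_modz b) = (a == b %[mod m%:Z])%Z.
Proof. by rewrite -val_eqE -eqz_nat !ord_modzE. Qed.

End Residues.

Definition range_set (T : finType) (F : nat -> T) : {set T} :=
  [set t | `[< exists n, F n = t >]].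

Lemma card_range_set_inj (T U : finType) (h : T -> U) (F : nat -> T) (G : nat -> U) :
  injective h -> G =1 h \o F -> #|range_set G| = #|range_set F|.
Proof.
move=> h_inj GE; rewrite -(card_imset (range_set F) h_inj).
apply: eq_card => u; rewrite inE; apply/asboolP/imsetP => [[n <-] | [t]].
  by exists (F n); rewrite ?GE // inE; apply/asboolP; exists n.
by rewrite inE => /asboolP [n <-] ->; exists n; rewrite GE.
Qed.

Lemma card_set_pair (T U : finType) (A : {set T * U}) :
  #|A| = (\sum_(t : T) #|[set u | (t, u) \in A]|)%N.
Proof.
rewrite -sum1_card (eq_bigr (fun t => \sum_(u | (t, u) \in A) 1)%N).
  by rewrite pair_big_dep; apply: eq_bigl => -[t u].
by move=> t _; rewrite -sum1_card; apply: eq_bigl => u; rewrite inE.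
Qed.

Lemma rho_range_set (x : nat -> int) m (m_gt0 : (0 < m)%N) :
  rho x m = #|range_set (ord_modz m_gt0 \o x)|.
Proof.
apply: eq_card => k; rewrite !inE.
by apply/asboolP/asboolP => -[n /(eq_ord_modz m_gt0)]; exists n.
Qed.

Lemma nat_fun_collision (T : finType) (F : nat -> T) :
  exists i j, (i < j)%N /\ F i = F j.
Proof.
pose G (i : 'I_#|T|.+1) := F i.
have /injectivePn [i [j neq_ij eq_ij]] : ~~ injectiveb G.
  by apply/injectiveP => /leq_card; rewrite card_ord ltnn.
case: (ltngtP i j) => [lt_ij | lt_ji | /val_inj eq_ij']; last by rewrite eq_ij' eqxx in neq_ij.
- by exists i, j.
- by exists j, i.
Qed.

Definition period_mod (x : nat -> int) (m t : nat) : Prop :=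
  forall n, (x (n + t)%N == x n %[mod m%:Z])%Z.

Lemma period_mod_congr x m t : period_mod x m t ->
  forall n n', n = n' %[mod t] -> (x n == x n' %[mod m%:Z])%Z.
Proof.
move=> xt.
have xE n : (x n %% m%:Z)%Z = (x (n %% t)%N %% m%:Z)%Z.
  rewrite {1}(divn_eq n t) addnC; elim: (n %/ t)%N => [|q IHq]; first by rewrite addn0.
  by rewrite mulSnr addnA (eqP (xt _)).
by move=> n n' eq_nn'; rewrite xE eq_nn' -xE.
Qed.

Section Recurrence.
Variable a1 : int.

Lemma inL_shift_sub x t : inL a1 x -> inL a1 (fun n => x (n + t)%N - x n).
Proof. by move=> xL n /=; rewrite !addSn !xL; ring. Qed.

Lemma inL_zchinese m1 m2 x1 x2 : inL a1 x1 -> inL a1 x2 ->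
  inL a1 (fun n => zchinese m1 m2 (x1 n) (x2 n)).
Proof. by move=> x1L x2L n; rewrite /zchinese !x1L !x2L; ring. Qed.

Lemma inL_dvdz_pairS y (m : int) n : inL a1 y ->
  ((m %| y n) && (m %| y n.+1))%Z = ((m %| y n.+1) && (m %| y n.+2))%Z.
Proof.
move=> yL; rewrite yL; have [m_dvd | _] := boolP (m %| y n.+1)%Z; last by rewrite andbF.
by rewrite andbT rpredDl // dvdz_mull.
Qed.

Lemma inL_dvdz y (m : int) i : inL a1 y ->
  (m %| y i)%Z -> (m %| y i.+1)%Z -> forall n, (m %| y n)%Z.
Proof.
move=> yL dvd_i dvd_iS n.
have pair0 k : ((m %| y k) && (m %| y k.+1))%Z = ((m %| y 0%N) && (m %| y 1%N))%Z.
  by elim: k => // k <-; rewrite [RHS](inL_dvdz_pairS _ _ yL).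
by have /andP [] : ((m %| y n) && (m %| y n.+1))%Z by rewrite pair0 -(pair0 i) dvd_i.
Qed.

Lemma inL_period_mod x m t i : inL a1 x ->
  (x (i + t)%N == x i %[mod m%:Z])%Z -> (x (i.+1 + t)%N == x i.+1 %[mod m%:Z])%Z ->
  period_mod x m t.
Proof.
move=> xL; rewrite !eqz_mod_dvd => dvd_i dvd_iS n; rewrite eqz_mod_dvd.
exact: (inL_dvdz (inL_shift_sub t xL) dvd_i dvd_iS).
Qed.

Lemma inL_eventual_period x m t : inL a1 x -> eventual_period x m t -> period_mod x m t.
Proof. by move=> xL [N xN]; apply: (inL_period_mod (i := N) xL); apply: xN. Qed.

Lemma inL_period_exists x m : inL a1 x -> (0 < m)%N ->
  exists2 t, (0 < t)%N & period_mod x m t.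
Proof.
move=> xL m_gt0.
have [i [j [lt_ij]]] :=
  nat_fun_collision (fun n => (ord_modz m_gt0 (x n), ord_modz m_gt0 (x n.+1))).
case=> /eqP eq_i /eqP eq_iS; exists (j - i)%N; first by rewrite subn_gt0.
apply: (inL_period_mod (i := i) xL).
  by rewrite subnKC ?(ltnW lt_ij) // -eqz_ord_modz eq_sym.
by rewrite addSn subnKC ?(ltnW lt_ij) // -eqz_ord_modz eq_sym.
Qed.

Lemma tau_inL x m : inL a1 x -> (0 < m)%N ->
  (0 < tau x m)%N /\ period_mod x m (tau x m).
Proof.
move=> xL m_gt0; rewrite /tau; case: pselect => [tauP | no_tau].
  by case: ex_minnP => t /asboolP [t_gt0 xt] _; split; last exact: inL_eventual_period xt.
case: no_tau; have [t t_gt0 xt] := inL_period_exists xL m_gt0.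
by exists t; apply/asboolP; split; last by exists 0%N.
Qed.

End Recurrence.

Lemma chinese_gcdn T1 T2 a b : a = b %[mod gcdn T1 T2] ->
  exists n, n = a %[mod T1] /\ n = b %[mod T2].
Proof.
have [-> | T1_gt0] := posnP T1; first by rewrite gcd0n => eq_ab; exists a.
have [-> | T2_gt0] := posnP T2; first by rewrite gcdn0 => eq_ab; exists b.
have [km kn def_km _] := egcdnP T1 T2_gt0; rewrite gcdnC in def_km.
pose a' := (a + b * T1)%N.
have le_b_a' : (b <= a')%N by rewrite (leq_trans _ (leq_addl _ _)) // leq_pmulr.
move=> eq_ab; have /dvdnP [q def_q] : (gcdn T1 T2 %| a' - b)%N.
  by rewrite -eqn_mod_dvd // -modnDmr (eqP (dvdn_mull _ (dvdn_gcdl T1 T2))) addn0 eq_ab.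
exists (b + km * T2 * q)%N; split; last by rewrite mulnAC addnC modnMDl.
have -> : (b + km * T2 * q = (kn * q + b) * T1 + a)%N.
  by rewrite def_km mulnDl (mulnC (gcdn _ _)) -def_q addnCA subnKC // /a'; ring.
by rewrite modnMDl.
Qed.

Lemma sum_ord_modn (F : nat -> nat) d n : (0 < d)%N -> (d %| n)%N ->
  (\sum_(s < n) F (s %% d) = n %/ d * \sum_(r < d) F r)%N.
Proof.
move=> d_gt0 /dvdnP [q ->]; rewrite mulnK //.
elim: q => [|q IHq]; first by rewrite big_ord0.
rewrite mulSnr big_split_ord /= IHq mulSnr; congr addn.
by apply: eq_bigr => i _; rewrite /= modnMDl modn_small.
Qed.

Lemma ord_modz_pair_inj m1 m2 (m1_gt0 : (0 < m1)%N) (m2_gt0 : (0 < m2)%N) :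
  coprime m1 m2 ->
  injective (fun k : 'I_(m1 * m2) => (ord_modz m1_gt0 k, ord_modz m2_gt0 k)).
Proof.
move=> co_m12 k k' /eqP; rewrite xpair_eqE !eqz_ord_modz -zchinese_remainder //.
rewrite -PoszM => /eqP; rewrite !modz_small ?ltz_nat ?ltn_ord // => -[eq_kk'].
exact: val_inj.
Qed.

Lemma rho_chinese m1 m2 (m1_gt0 : (0 < m1)%N) (m2_gt0 : (0 < m2)%N) x x1 x2 :
  coprime m1 m2 ->
  (forall n, (x n == x1 n %[mod m1%:Z])%Z /\ (x n == x2 n %[mod m2%:Z])%Z) ->
  rho x (m1 * m2) =
    #|range_set (fun n => (ord_modz m1_gt0 (x1 n), ord_modz m2_gt0 (x2 n)))|.
Proof.
move=> co_m12 x_mod; have M_gt0 : (0 < m1 * m2)%N by rewrite muln_gt0 m1_gt0.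
rewrite (rho_range_set _ M_gt0); symmetry.
apply: (card_range_set_inj (ord_modz_pair_inj (m1_gt0 := m1_gt0) (m2_gt0 := m2_gt0) co_m12)) => n.
have : ((ord_modz M_gt0 (x n))%:Z == x n %[mod m1%:Z * m2%:Z])%Z.
  by rewrite -PoszM ord_modzE modz_mod.
rewrite zchinese_remainder // => /andP [r1 r2].
have [x_x1 x_x2] := x_mod n.
apply/eqP; rewrite xpair_eqE !eqz_ord_modz.
by rewrite eq_sym (eqP r1) (eqP x_x1) eq_sym (eqP r2) (eqP x_x2) !eqxx.
Qed.

Lemma rho_eq_period_inj x m t (m_gt0 : (0 < m)%N) :
  period_mod x m t -> rho x m = t -> injective (fun s : 'I_t => ord_modz m_gt0 (x s)).
Proof.
have [-> _ _ [] // | t_gt0 xt rho_t] := posnP t.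
pose g (s : 'I_t) := ord_modz m_gt0 (x s).
have /imset_injP g_inj : #|g @: setT| == #|[set: 'I_t]|.
  rewrite cardsT card_ord; apply/eqP; rewrite -[RHS]rho_t (rho_range_set _ m_gt0).
  apply: eq_card => k.
  rewrite inE; apply/imsetP/asboolP => [[s _ ->] | [n <-]]; first by exists (val s).
  exists (ord_modn t_gt0 n) => //; apply/eqP; rewrite eqz_ord_modz.
  by apply: (period_mod_congr xt); rewrite /= modn_mod.
by move=> s s'; apply: g_inj; rewrite inE.
Qed.

Lemma card_residues_progression x m T1 T2 (m_gt0 : (0 < m)%N) (T2_gt0 : (0 < T2)%N) :
  period_mod x m T1 ->
  #|range_set (fun n => (ord_modn T2_gt0 n, ord_modz m_gt0 (x n)))| =
    (T2 %/ gcdn T1 T2 * \sum_(r < gcdn T1 T2) rho_ap x m r (gcdn T1 T2))%N.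
Proof.
move=> xT1; set d := gcdn T1 T2.
have d_gt0 : (0 < d)%N by rewrite gcdn_gt0 T2_gt0 orbT.
rewrite card_set_pair -(sum_ord_modn (fun r => rho_ap x m r d)) ?dvdn_gcdr //.
apply: eq_bigr => s _; apply: eq_card => b; rewrite !inE.
apply/asboolP/asboolP => [[n [<- <-]] | [n [n_s /(eq_ord_modz m_gt0) x_b]]].
  exists n; split; last by rewrite ord_modzE.
  by rewrite /= modn_mod (modn_dvdm _ (dvdn_gcdr _ _)).
rewrite modn_mod in n_s; have [n' [n'_n n'_s]] := chinese_gcdn n_s.
exists n'; congr (_, _); first by apply: val_inj; rewrite /= n'_s modn_small.
by rewrite -x_b; apply/eqP; rewrite eqz_ord_modz; apply: period_mod_congr n'_n.
Qed.

Theorem mainTheorem15 (a1 : int) (m1 m2 : nat) (x1 x2 : nat -> int) :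
  1 <= a1 -> (0 < m1)%N -> (0 < m2)%N -> coprime m1 m2 ->
  inL a1 x1 -> inL a1 x2 ->
  rho x2 m2 = tau x2 m2 ->
  let d := gcdn (tau x1 m1) (tau x2 m2) in
  exists x : nat -> int,
    [/\ inL a1 x,
        (forall j : nat, (x j == x1 j %[mod m1%:Z])%Z /\ (x j == x2 j %[mod m2%:Z])%Z) &
        rho x (m1 * m2) = (tau x2 m2 %/ d * \sum_(r < d) rho_ap x1 m1 r d)%N].
Proof.
move=> _ m1_gt0 m2_gt0 co_m12 x1L x2L rho2 d.
have [_ x1T1] := tau_inL x1L m1_gt0.
have [T2_gt0 x2T2] := tau_inL x2L m2_gt0.
pose x n := zchinese m1 m2 (x1 n) (x2 n).
have x_mod n : (x n == x1 n %[mod m1%:Z])%Z /\ (x n == x2 n %[mod m2%:Z])%Z.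
  by rewrite zchinese_modl ?zchinese_modr.
exists x; split => //; first exact: inL_zchinese.
have x2_inj := rho_eq_period_inj (m_gt0 := m2_gt0) x2T2 rho2.
rewrite (rho_chinese m1_gt0 m2_gt0 co_m12 x_mod).
rewrite -(card_residues_progression m1_gt0 T2_gt0 x1T1).
pose h (p : 'I_(tau x2 m2) * 'I_m1) := (p.2, ord_modz m2_gt0 (x2 p.1)).
have h_inj : injective h.
  move=> [s b] [s' b'] eq_h; have /= eq_b := congr1 fst eq_h.
  by have /= /x2_inj eq_s := congr1 snd eq_h; rewrite eq_s eq_b.
apply: (card_range_set_inj h_inj) => n; congr (_, _); apply/eqP.
by rewrite eqz_ord_modz; apply: (period_mod_congr x2T2); rewrite /= modn_mod.
Qed.
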